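(* Let $X$ and $Y$ be Hausdorff topological spaces and let $\varphi: Y \to X$ be continuous. Let $Z = Y \dot\cup_\varphi X$ be the set-theoretic disjoint union of $X$ and $Y$ with the topology generated by the base consisting of (a) all open subsets of $Y$, and (b) all sets of the form $[U,K] := U \cup (\varphi^{-1}(U) \setminus K)$, where $U$ is open in $X$ and $K$ is a compact subset of $Y$. Then: \begin{enumerate} \item $X$ is closed in $Z$, $Y$ is open in $Z$, and both $X$ and $Y$ inherit their original topologies as subspaces of $Z$. \item If $Y$ is locally compact, then $Z$ is Hausdorff. \item If $X$ is compact, then $Z$ is compact. \item If $X$ and $Y$ are first countable, $X$ is compact, $Y$ is locally compact, and $\varphi^{-1}(x)$ is compact for each $x \in X$, then $Z$ is first countable. \item If $X$ and $Y$ are zero-dimensional, $X$ is compact, and $Y$ is locally compact, then $Z$ is zero-dimensional. \item If $X$ is second countable and $Y^\omega$ is hereditarily separable, then $Z^\omega$ is hereditarily separable. \end{enumerate}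
   Context: A space is hereditarily separable if every subspace of it is separable. $Y^\omega$ and $Z^\omega$ denote countable Tychonoff powers. *)

From HB Require Import structures.
From mathcomp Require Import all_boot all_order all_algebra.
From mathcomp Require Import all_classical all_reals all_analysis.
Set Implicit Arguments. Unset Strict Implicit. Unset Printing Implicit Defensive.
Import Order.TTheory GRing.Theory Num.Theory.
Local Open Scope classical_set_scope.

Definition locally_compact_space (T : topologicalType) : Prop :=
  forall x : T, exists K : set T, compact K /\ nbhs x K.

Definition first_countable (T : topologicalType) : Prop :=
  forall x : T, exists B : set (set T),
    [/\ countable B, (forall U, B U -> nbhs x U) &
        (forall U, nbhs x U -> exists2 V, B V & V `<=` U)].

Definition zero_dim (T : topologicalType) : Prop :=
  forall (x : T) (U : set T), nbhs x U ->
    exists V : set T, [/\ clopen V, V x & V `<=` U].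

(* A subspace A is separable: it has a countable subset dense in A
   (the closure of D in the subspace A is closure D `&` A). *)
Definition separable_subspace (T : topologicalType) (A : set T) : Prop :=
  exists D : set T, [/\ D `<=` A, countable D & A `<=` closure D].

Definition hereditarily_separable (T : topologicalType) : Prop :=
  forall A : set T, separable_subspace A.

Notation power_omega T := {ptws nat -> T}.

(* the carrier: disjoint union of Y and X; indexed by phi since the
   topology depends on phi *)
Definition glue_type (X Y : topologicalType) (phi : Y -> X) : Type :=
  (Y + X)%type.

Section Glue.
Context (X Y : topologicalType) (phi : Y -> X).

HB.instance Definition _ := Choice.on (glue_type phi).

Definition glueY : Y -> glue_type phi := inl.
Definition glueX : X -> glue_type phi := inr.

Definition glue_bracket (U : set X) (K : set Y) : set (glue_type phi) :=
  glueX @` U `|` glueY @` (phi @^-1` U `\` K).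

Definition glue_base : set (set (glue_type phi)) :=
  [set W | (exists V : set Y, open V /\ W = glueY @` V) \/
           (exists (U : set X) (K : set Y),
               [/\ open U, compact K & W = glue_bracket U K])].

HB.instance Definition _ :=
  @isSubBaseTopological.Build (glue_type phi) (set (glue_type phi)) glue_base id.

End Glue.

From HB Require Import structures.
From mathcomp Require Import all_boot all_order all_algebra.
From mathcomp Require Import all_classical all_reals all_analysis.
Local Open Scope classical_set_scope.

(* The retraction r : Z -> X (identity on X, phi on Y) is continuous and
   [U,K] = r^-1(U) minus the copy of K, so the brackets around a point of X form a
   neighbourhood base there, while Y is an open subspace of Z.  An ultrafilter on Z
   either contains the copy of a compact subset of Y, and converges in it, or avoids
   all of them, and then converges to x for any cluster point x in X of its image
   under r.  First countability and zero-dimensionality at points of X come from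
   enlarging compact subsets of Y to (open) compact neighbourhoods.
   For part 6, send a point of Z^omega to Y^omega by replacing its X-coordinates by
   a fixed y0.  Every neighbourhood of a point contains C `&` (preimage of a
   neighbourhood in Y^omega) with C a finite intersection of cylinders from a
   countable family (a Y-coordinate lies in Y, an X-coordinate in a basic open set
   of X), so a countable set dense in the image of each A `&` C lifts to a countable
   dense subset of A. *)

Lemma cvg_subbase (T : topologicalType) (S : set (set T)) (F : set_system T) (z : T) :
  (forall A, open A -> exists2 D, D `<=` finI_from S id & \bigcup_(B in D) B = A) ->
  Filter F -> (forall A, S A -> A z -> F A) -> F --> z.
Proof.
move=> openS FF SF W; rewrite nbhsE => -[P [/openS [D DS DP] Pz] PW].
move: Pz; rewrite -DP => -[A DA Az]; have [E ES EA] := DS _ DA.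
apply: (@filterS _ _ _ A); first by move=> t At; apply: PW; rewrite -DP; exists A.
rewrite -EA; apply: filter_bigI => B EB; apply: SF; first by have := ES _ EB; rewrite inE.
by move: Az; rewrite -EA; apply.
Qed.

Lemma open_ptws_subbase (I : Type) (T : topologicalType) (A : set {ptws I -> T}) :
  open A -> exists2 D, D `<=` finI_from
      [set B | exists i (V : set T), open V /\ B = (fun g => g i) @^-1` V] id &
    \bigcup_(B in D) B = A.
Proof.
move=> [D DS <-]; exists D => // B /DS [E ES <-]; exists E => // C /ES.
by rewrite !inE => -[i _ [V oV <-]]; exists i, V.
Qed.

Lemma compact_finite_open_cover (T : topologicalType) (K : set T) (V : T -> set T) :
  compact K -> (forall y, K y -> open (V y) /\ V y y) ->
  exists s : seq T, K `<=` \bigcup_(y in [set` s]) V y.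
Proof.
move=> /compact_near_coveringP cK KV.
pose F := filter_from [set: seq T] (fun s0 => [set s : seq T | {subset s0 <= s}]).
have FF : Filter F.
  apply: filter_from_filter; first by exists [::].
  move=> s1 s2 _ _; exists (s1 ++ s2) => // s s12s.
  by split=> y ys; apply: s12s; rewrite mem_cat ys ?orbT.
have [|s0 _ Ks0] := cK (seq T) F (fun s => \bigcup_(y in [set` s]) V y) FF.
  move=> x Kx; have [oV Vx] := KV x Kx.
  exists (V x, [set s : seq T | {subset [:: x] <= s}]); first split=> //=.
  - exact: open_nbhs_nbhs.
  - by exists [:: x].
  by move=> [t s] /= [Vt xs]; exists x => //; apply: xs; rewrite mem_head.
by exists s0; apply: Ks0.
Qed.

Lemma compact_bigcup_seq (T : topologicalType) (I : choiceType) (s : seq I) (L : I -> set T) :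
  (forall i, compact (L i)) -> compact (\bigcup_(i in [set` s]) L i).
Proof. by move=> cL; rewrite bigcup_seq; apply: bigsetU_compact => i _. Qed.

Lemma locally_compact_compact_nbhs {T : topologicalType} [K : set T] :
  locally_compact_space T -> compact K ->
  exists O C, [/\ open O, compact C, K `<=` O & O `<=` C].
Proof.
move=> /choice [L lcL] cK.
have [|s KV] := @compact_finite_open_cover T K (fun y => (L y)°) cK.
  by move=> y _; split; [exact: open_interior|exact: nbhs_singleton (nbhs_interior (lcL y).2)].
exists (\bigcup_(y in [set` s]) (L y)°), (\bigcup_(y in [set` s]) L y); split => //.
- by apply: bigcup_open => y _; exact: open_interior.
- by apply: compact_bigcup_seq => y; exact: (lcL y).1.
- by move=> t [y sy Lt]; exists y => //; exact: interior_subset.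
Qed.

Lemma zero_dim_compact_open_cover {T : topologicalType} [K : set T] :
  locally_compact_space T -> zero_dim T -> compact K ->
  exists2 C, open C /\ compact C & K `<=` C.
Proof.
move=> lcT zT cK.
have /choice [V HV] : forall y : T, exists V : set T, [/\ open V, compact V & V y].
  move=> y; have [L [cL yL]] := lcT y; have [V [[oV clV] Vy VL]] := zT y L yL.
  by exists V; split => //; exact: subclosed_compact clV cL VL.
have [|s KV] := @compact_finite_open_cover T K V cK; first by move=> y _; have [] := HV y.
exists (\bigcup_(y in [set` s]) V y) => //; split.
- by apply: bigcup_open => y _; have [] := HV y.
- by apply: compact_bigcup_seq => y; have [] := HV y.
Qed.

Lemma countableU (T : Type) (A B : set T) : countable A -> countable B -> countable (A `|` B).
Proof.
move=> cA cB; have -> : A `|` B = \bigcup_(b in [set: bool]) (if b then A else B).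
  apply/seteqP; split=> [t [At|Bt]|t [[] _]]; by [exists true|exists false|left|right].
by apply: bigcup_countable => [|[] _ //]; exact: countableP.
Qed.

Lemma countable_sub_image {T U : Type} [f : T -> U] [B : set T] [E : set U] :
  countable E -> E `<=` f @` B -> exists2 D, D `<=` B /\ countable D & E `<=` f @` D.
Proof.
move=> cE EfB; have [[a0 Ba0]|nB] := pselect (exists a, B a); last first.
  by exists set0; [split=> //; exact: countable0|move=> w /EfB [a Ba _]; case: nB; exists a].
have /choice [g Hg] : forall w, exists a, B a /\ (E w -> f a = w).
  move=> w; have [/EfB [a Ba faw]|nEw] := pselect (E w); first by exists a.
  by exists a0.
exists (g @` E); first split.
- by move=> _ [w _ <-]; have [] := Hg w.
- exact: card_le_trans (card_image_le _ _) cE.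
by move=> w Ew; exists (g w); [exists w|have [_ ->] := Hg w].
Qed.

Lemma hereditarily_separable_pullback_base {T S : topologicalType} (f : T -> S) [G : set (set T)] :
  countable G -> hereditarily_separable S ->
  (forall (a : T) (W : set T), nbhs a W ->
     exists2 C, G C & C a /\ exists2 N, nbhs (f a) N & C `&` f @^-1` N `<=` W) ->
  hereditarily_separable T.
Proof.
move=> cG hsS Gf A.
have /choice [D HD] : forall C, exists D, [/\ D `<=` A `&` C, countable D &
    f @` (A `&` C) `<=` closure (f @` D)].
  move=> C; have [E [EAC cE AE]] := hsS (f @` (A `&` C)).
  have [D [DAC cD] ED] := countable_sub_image cE EAC.
  by exists D; split=> //; apply: subset_trans AE _; exact: closureS.
exists (\bigcup_(C in G) D C); split.
- by move=> a [C _ Da]; have [DAC _ _] := HD C; have [] := DAC a Da.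
- by apply: bigcup_countable cG _ => C _; have [] := HD C.
move=> a Aa W nW; have [C GC [Ca [N nN CNW]]] := Gf a W nW.
have [DAC _ AD] := HD C.
have [_ [[d Dd <-] Nd]] := AD (f a) (ex_intro2 _ _ a (conj Aa Ca) erefl) N nN.
exists d; split; first by exists C.
by apply: CNW; split=> //; exact: (DAC d Dd).2.
Qed.

Section GlueTopology.
Context {X Y : topologicalType} (phi : Y -> X).
Local Notation Z := (glue_type phi).
Local Notation gX := (glueX phi).
Local Notation gY := (glueY phi).
Local Notation br := (@glue_bracket X Y phi).

Definition glue_retract (z : Z) : X := match z with inl y => phi y | inr x => x end.
Local Notation r := glue_retract.

Lemma glueY_inj : injective gY. Proof. by move=> ? ? []. Qed.

Lemma glue_bracketE (U : set X) (K : set Y) : br U K = r @^-1` U `\` gY @` K.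
Proof.
apply/seteqP; split=> [z [[x Ux <-]|[y [Uy Ky] <-]]|[y|x] [Uz nKz]].
- by split=> // -[].
- by split=> // -[y' Ky' /glueY_inj yy']; apply: Ky; rewrite -yy'.
- by right; exists y => //; split=> // Ky; apply: nKz; exists y.
- by left; exists x.
Qed.

Lemma glue_bracketI (U1 U2 : set X) (K1 K2 : set Y) :
  br U1 K1 `&` br U2 K2 = br (U1 `&` U2) (K1 `|` K2).
Proof.
rewrite !glue_bracketE image_setU preimage_setI.
apply/seteqP; split=> z.
  by move=> [[U1z nK1z] [U2z nK2z]]; split=> // -[].
by move=> [[U1z U2z] nKz]; split; split=> // Kz; apply: nKz; [left|right].
Qed.

Lemma glue_bracketS (U1 U2 : set X) (K1 K2 : set Y) :
  U1 `<=` U2 -> K2 `&` phi @^-1` U1 `<=` K1 -> br U1 K1 `<=` br U2 K2.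
Proof.
rewrite !glue_bracketE => U12 K21 z [U1z nK1z]; split; first exact: U12.
move=> [y K2y yz]; apply: nK1z; exists y => //; apply: K21.
by split=> //; move: U1z; rewrite -yz.
Qed.

Lemma open_glue_subbase (A : set Z) :
  open A -> exists2 D, D `<=` finI_from (@glue_base X Y phi) id & \bigcup_(B in D) B = A.
Proof. by move=> [D DB <-]; exists D. Qed.

Lemma glue_base_open (A : set Z) : glue_base A -> open A.
Proof.
move=> BA; exists [set A]; last by rewrite bigcup_set1.
by move=> _ ->; exact: finI_from1.
Qed.

Lemma open_glueY (V : set Y) : open V -> open (gY @` V).
Proof. by move=> oV; apply: glue_base_open; left; exists V. Qed.

Lemma open_glue_bracket (U : set X) (K : set Y) : open U -> compact K -> open (br U K).
Proof. by move=> oU cK; apply: glue_base_open; right; exists U, K. Qed.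

Lemma closed_glueY_compact (K : set Y) : compact K -> closed (gY @` K).
Proof.
move=> cK; suff -> : gY @` K = ~` br setT K.
  by rewrite closedC; apply: open_glue_bracket => //; exact: openT.
by rewrite glue_bracketE preimage_setT setTD setCK.
Qed.

Lemma glue_retract_continuous : continuous r.
Proof.
apply/continuousP => U oU; suff -> : r @^-1` U = br U set0.
  by apply: open_glue_bracket => //; exact: compact0.
by rewrite glue_bracketE image_set0 setD0.
Qed.

Lemma nbhs_glueY_image (y : Y) (V : set Y) : nbhs y V -> nbhs (gY y) (gY @` V).
Proof.
rewrite nbhsE => -[P [oP Py] PV]; apply: (@filterS _ _ _ (gY @` P)).
  by move=> _ [t Pt <-]; exists t => //; exact: PV.
by apply: open_nbhs_nbhs; split; [exact: open_glueY|exists y].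
Qed.

Lemma glueX_continuous : continuous gX.
Proof.
move=> x; apply: cvg_subbase; first exact: open_glue_subbase.
move=> _ [[V [_ ->]] [] //|[U [K [oU _ ->]]]].
rewrite glue_bracketE => -[Ux _]; apply: (@filterS _ _ _ U).
  by move=> t Ut; split=> // -[].
exact: open_nbhs_nbhs.
Qed.

Lemma glueY_continuous : hausdorff_space Y -> continuous phi -> continuous gY.
Proof.
move=> hY cphi y; apply: cvg_subbase; first exact: open_glue_subbase.
move=> _ [[V [oV ->]] [y' Vy' /glueY_inj <-]|[U [K [oU cK ->]]]].
  apply: (@filterS _ _ _ V); first by move=> t Vt; exists t.
  exact: open_nbhs_nbhs.
move=> Bgy; apply: (@filterS _ _ _ (phi @^-1` U `\` K)).
  by move=> t [Ut Kt]; right; exists t.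
apply: open_nbhs_nbhs; split.
  by apply: openI; [exact: (continuousP _).1 cphi U oU|rewrite openC; exact: compact_closed].
by move: Bgy; rewrite glue_bracketE => -[Uy nKy]; split=> // Ky; apply: nKy; exists y.
Qed.

Lemma nbhs_glueX [x : X] [W : set Z] : nbhs (gX x) W ->
  exists U K, [/\ open U, U x, compact K & br U K `<=` W].
Proof.
pose I := [set UK : set X * set Y | [/\ open UK.1, UK.1 x & compact UK.2]].
have FI : Filter (filter_from I (fun UK => br UK.1 UK.2)).
  apply: filter_from_filter.
    by exists (setT, set0); split=> //; [exact: openT|exact: compact0].
  move=> [U1 K1] [U2 K2] [/= oU1 U1x cK1] [/= oU2 U2x cK2].
  exists (U1 `&` U2, K1 `|` K2); first by split; [exact: openI|split|exact: compactU].
  by rewrite glue_bracketI.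
have : filter_from I (fun UK => br UK.1 UK.2) --> gX x.
  apply: cvg_subbase; first exact: open_glue_subbase.
  move=> _ [[V [_ ->]] [] //|[U [K [oU cK ->]]]].
  rewrite glue_bracketE => -[Ux _]; exists (U, K) => //.
  by rewrite glue_bracketE.
by move=> /[apply] -[[U K] [oU Ux cK] UKW]; exists U, K.
Qed.

Lemma range_glueXE : range gX = ~` range gY.
Proof.
apply/seteqP; split=> [_ [x _ <-] [y _] //|[y nYy|x _]]; last by exists x.
by case: nYy; exists y.
Qed.

Lemma open_range_glueY : open (range gY).
Proof. exact/open_glueY/openT. Qed.

Lemma closed_range_glueX : closed (range gX).
Proof. by rewrite range_glueXE closedC; exact: open_range_glueY. Qed.

Lemma open_glueXP (A : set X) : open A <-> exists V : set Z, open V /\ A = gX @^-1` V.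
Proof.
split=> [oA|[V [oV ->]]]; last by move/continuousP: glueX_continuous; apply.
by exists (r @^-1` A); split=> //; move/continuousP: glue_retract_continuous; apply.
Qed.

Lemma open_glueYP (A : set Y) : hausdorff_space Y -> continuous phi ->
  open A <-> exists V : set Z, open V /\ A = gY @^-1` V.
Proof.
move=> hY cphi; split=> [oA|[V [oV ->]]].
  exists (gY @` A); split; first exact: open_glueY.
  by apply/seteqP; split=> [y Ay|y [y' Ay' /glueY_inj <-]] //; exists y.
by move/continuousP: (glueY_continuous hY cphi); apply.
Qed.

Lemma glue_hausdorff : hausdorff_space X -> hausdorff_space Y ->
  locally_compact_space Y -> hausdorff_space Z.
Proof.
move=> hX hY lcY.
have sepYX (y : Y) (x : X) :
    exists2 A, nbhs (gY y) A & exists2 B, nbhs (gX x) B & A `&` B `<=` set0.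
  have [K [cK Ky]] := lcY y; exists (gY @` K); first exact: nbhs_glueY_image.
  exists (br setT K).
    apply: open_nbhs_nbhs; split; last by left; exists x.
    by apply: open_glue_bracket => //; exact: openT.
  by move=> z [Kz]; rewrite glue_bracketE => -[].
case=> [y1|x1] [y2|x2] cl.
- congr inl; apply: hY => U V /nbhs_glueY_image nU /nbhs_glueY_image nV.
  have [_ [[u Uu <-] [v Vv /glueY_inj vu]]] := cl _ _ nU nV.
  by exists u; split; rewrite // -vu.
- by have [A nA [B nB AB]] := sepYX y1 x2; have [z /AB] := cl A B nA nB.
- have [A nA [B nB AB]] := sepYX y2 x1; have [z [Bz Az]] := cl B A nB nA.
  by have := AB z (conj Az Bz).
- congr inr; apply: hX => U V nU nV.
  have rU := glue_retract_continuous (gX x1) U nU.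
  have rV := glue_retract_continuous (gX x2) V nV.
  by have [z [Uz Vz]] := cl _ _ rU rV; exists (r z).
Qed.

Lemma glue_compact : hausdorff_space Y -> continuous phi ->
  compact [set: X] -> compact [set: Z].
Proof.
move=> hY cphi cX; rewrite compact_ultra => F UF _.
have [[K [cK FK]]|nK] := pselect (exists K, compact K /\ F (gY @` K)).
  have : compact (gY @` K).
    by apply: continuous_compact cK; apply: continuous_subspaceT; exact: glueY_continuous.
  by rewrite compact_ultra => /(_ F UF FK) [z [_ Fz]]; exists z.
have FnK K : compact K -> F (~` (gY @` K)).
  by move=> cK; have [FK|//] := in_ultra_setVsetC (gY @` K) UF; case: nK; exists K.
have [x [_ clx]] := cX (r @ F) (fmap_proper_filter r (@ultra_proper _ _ UF)) filterT.
exists (gX x); split=> // W /nbhs_glueX [U [K [oU Ux cK UKW]]].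
apply: filterS UKW _; have [//|FnUK] := in_ultra_setVsetC (br U K) UF.
have FrnU : F (r @^-1` ~` U).
  apply: filterS (filterI FnUK (FnK K cK)) => z [nUKz nKz] Uz.
  by apply: nUKz; rewrite glue_bracketE.
by have [t []] := clx _ U FrnU (open_nbhs_nbhs (conj oU Ux)).
Qed.

Lemma glue_first_countable : hausdorff_space X -> hausdorff_space Y -> continuous phi ->
  first_countable X -> first_countable Y -> locally_compact_space Y ->
  (forall x, compact (phi @^-1` [set x])) -> first_countable Z.
Proof.
move=> hX hY cphi fX fY lcY cfib; case=> [y|x].
  have [B [cB BN NB]] := fY y.
  exists [set gY @` N | N in B]; split.
  - exact: card_le_trans (card_image_le _ _) cB.
  - by move=> _ [N BN' <-]; exact/nbhs_glueY_image/BN.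
  - move=> W /(glueY_continuous hY cphi) /NB [N BN' NW].
    by exists (gY @` N); [exists N|move=> _ [t /NW Wt <-]].
have [B [cB BN NB]] := fX x.
have [P [L [oP cL fibP PL]]] := locally_compact_compact_nbhs lcY (cfib x).
exists [set br N° L | N in B]; split.
- exact: card_le_trans (card_image_le _ _) cB.
- move=> _ [N BN' <-]; apply: open_nbhs_nbhs; split.
    by apply: open_glue_bracket => //; exact: open_interior.
  by left; exists x => //; exact: BN.
move=> W /nbhs_glueX [U [K [oU Ux cK UKW]]].
have cC : closed (phi @` (K `\` P)).
  apply: compact_closed hX _; apply: continuous_compact; first exact: continuous_subspaceT.
  by rewrite setDE; apply: compact_closedI cK _; rewrite closedC.
have nUC : nbhs x (U `\` phi @` (K `\` P)).
  apply: open_nbhs_nbhs; split; first by rewrite setDE; apply: openI => //; rewrite openC.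
  by split=> // -[y [Ky nPy] yx]; apply: nPy; exact: fibP.
have [N BN' NUC] := NB _ nUC.
exists (br N° L); first by exists N.
apply: subset_trans UKW; apply: glue_bracketS => [t /interior_subset /NUC []//|].
move=> y [Ky /interior_subset /NUC [_ nCy]]; apply: PL; apply: contrapT => nPy.
by apply: nCy; exists y.
Qed.

Lemma glue_zero_dim : hausdorff_space Y -> continuous phi ->
  zero_dim X -> zero_dim Y -> locally_compact_space Y -> zero_dim Z.
Proof.
move=> hY cphi zX zY lcY; case=> [y|x] W nW.
  have [K [cK Ky]] := lcY y.
  have nWY : nbhs y (gY @^-1` W) := glueY_continuous hY cphi y W nW.
  have [V [[oV clV] Vy VWK]] := zY y _ (filterI nWY Ky).
  exists (gY @` V); split; last by move=> _ [t /VWK [Wt _] <-].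
  - split; first exact: open_glueY.
    by apply: closed_glueY_compact; apply: subclosed_compact clV cK _ => t /VWK [].
  - by exists y.
have [U [K [oU Ux cK UKW]]] := nbhs_glueX nW.
have [C [[oC clC] Cx CU]] := zX x U (open_nbhs_nbhs (conj oU Ux)).
have [L [oL cL] KL] := zero_dim_compact_open_cover lcY zY cK.
exists (br C L); split; last 1 first.
- by apply: subset_trans UKW; apply: glue_bracketS => // t [/KL].
- split; first exact: open_glue_bracket.
  rewrite glue_bracketE setDE; apply: closedI; last by rewrite closedC; exact: open_glueY.
  by move/continuous_closedP: glue_retract_continuous; apply.
- by left; exists x.
Qed.

End GlueTopology.

Section GluePower.
Context {X Y : topologicalType} (phi : Y -> X).
Local Notation Z := (glue_type phi).
Local Notation gX := (glueX phi).
Local Notation gY := (glueY phi).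
Local Notation PZ := {ptws nat -> Z}.

Definition glue_cylY (n : nat) : set PZ := [set g | range gY (g n)].
Definition glue_cylX (n : nat) (b : set X) : set PZ := [set g | (gX @` b) (g n)].

Definition glue_cylinders (Bs : set (set X)) : set (set PZ) :=
  \bigcup_n ([set glue_cylY n] `|` glue_cylX n @` Bs).

Definition glue_pullback {S : topologicalType} (f : PZ -> S) (Bs : set (set X))
    (a : PZ) : set_system PZ :=
  [set W | exists2 C, finI_from (glue_cylinders Bs) id C & C a /\
     exists2 N, nbhs (f a) N & C `&` f @^-1` N `<=` W].

Lemma countable_glue_cylinders [Bs : set (set X)] :
  countable Bs -> countable (finI_from (glue_cylinders Bs) id).
Proof.
move=> cBs; apply/finI_from_countable/bigcup_countable; first exact: countableP.
by move=> n _; apply: countableU; [exact: countable1|exact: card_le_trans (card_image_le _ _) cBs].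
Qed.

Lemma glue_pullback_filter {S : topologicalType} (f : PZ -> S) (Bs : set (set X))
    (a : PZ) : Filter (glue_pullback f Bs a).
Proof.
constructor.
- exists setT; first by exists finmap.fset0 => //; rewrite set_fset0 bigcap_set0.
  by split=> //; exists setT => //; exact: filterT.
- move=> W1 W2 [C1 fC1 [C1a [N1 nN1 W1CN]]] [C2 fC2 [C2a [N2 nN2 W2CN]]].
  exists (C1 `&` C2); first exact: finI_fromI.
  split=> //; exists (N1 `&` N2); first exact: filterI.
  by move=> d [[C1d C2d] [N1d N2d]]; split; [exact: W1CN|exact: W2CN].
- move=> W1 W2 W12 [C fC [Ca [N nN WCN]]].
  by exists C => //; split=> //; exists N => //; exact: subset_trans W12.
Qed.

Lemma glue_pullback_cvg {S : topologicalType} (f : PZ -> S) (Bs : set (set X))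
    (a : PZ) : basis Bs ->
  (forall n y, a n = gY y -> forall V, open V -> V (a n) ->
     exists2 N, nbhs (f a) N & glue_cylY n `&` f @^-1` N `<=` [set g | V (g n)]) ->
  glue_pullback f Bs a --> a.
Proof.
move=> [_ BsB] Yf; have FF := glue_pullback_filter f Bs a.
apply: cvg_subbase; first exact: open_ptws_subbase.
move=> _ [n [V [oV ->]]] Van; case an: (a n) => [y|x].
  have [N nN CNV] := Yf n y an V oV Van.
  exists (glue_cylY n); first by apply: finI_from1; exists n => //; left.
  by split; [exists y|exists N].
have Vx : V (gX x) by move: Van; rewrite /preimage /= an.
have [U [K [oU Ux _ UKV]]] := nbhs_glueX phi (open_nbhs_nbhs (conj oV Vx)).
have [b [Bsb bx] bU] := BsB x U (open_nbhs_nbhs (conj oU Ux)).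
exists (glue_cylX n b); first by apply: finI_from1; exists n => //; right; exists b.
split; first by exists x.
exists setT; first exact: filterT.
by move=> d [[x' bx' dn] _]; rewrite /= -dn; apply: UKV; left; exists x'; [exact: bU|].
Qed.

Definition glue_power_to_Y (y0 : Y) (a : PZ) : {ptws nat -> Y} :=
  fun n => if a n is inl y then y else y0.

Lemma glue_power_to_Y_cylY (y0 : Y) [a : PZ] [n : nat] [y : Y] [V : set Z] :
  hausdorff_space Y -> continuous phi -> a n = gY y -> open V -> V (a n) ->
  exists2 N, nbhs (glue_power_to_Y y0 a) N &
    glue_cylY n `&` glue_power_to_Y y0 @^-1` N `<=` [set g | V (g n)].
Proof.
move=> hY cphi an oV Van.
exists [set w : {ptws nat -> Y} | (gY @^-1` V) (w n)].
  apply: (@proj_continuous nat (fun _ => Y) n).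
  have -> : proj n (glue_power_to_Y y0 a) = y by rewrite /proj /glue_power_to_Y an.
  apply: open_nbhs_nbhs; split; last by move: Van; rewrite an.
  by move/continuousP: (glueY_continuous phi hY cphi); apply.
by move=> d [[y' _ dn]]; rewrite /= /glue_power_to_Y -dn /= dn.
Qed.

Lemma glue_power_hereditarily_separable : hausdorff_space Y -> continuous phi ->
  @second_countable X -> hereditarily_separable {ptws nat -> Y} ->
  hereditarily_separable PZ.
Proof.
move=> hY cphi [Bs cBs bBs] hsY.
have cF := countable_glue_cylinders cBs.
have [[y0 _]|nY] := pselect (exists y : Y, True).
  apply: (hereditarily_separable_pullback_base (glue_power_to_Y y0) cF hsY) => a W.
  apply: glue_pullback_cvg => //.
  move=> n y an V oV Van; have [N nN NV] := glue_power_to_Y_cylY y0 hY cphi an oV Van.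
  by exists N.
(* With Y empty the cylinders alone form a base, and any countable target does. *)
have hsB : hereditarily_separable bool.
  by move=> A; exists A; split; [|exact: countableP|exact: subset_closure].
apply: (hereditarily_separable_pullback_base (fun _ => true) cF hsB) => a W.
by apply: glue_pullback_cvg => // n y; case: nY; exists y.
Qed.

End GluePower.

Theorem lemma3p2 (X Y : topologicalType) (phi : Y -> X) :
  hausdorff_space X -> hausdorff_space Y -> continuous phi ->
  (* 1 *)
  ([/\ closed (range (glueX phi)), open (range (glueY phi)),
       (forall A : set X,
          open A <-> exists V : set (glue_type phi), open V /\ A = glueX phi @^-1` V) &
       (forall A : set Y,
          open A <-> exists V : set (glue_type phi), open V /\ A = glueY phi @^-1` V)])
  /\
  (* 2 *)
  (locally_compact_space Y -> hausdorff_space (glue_type phi))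
  /\
  (* 3 *)
  (compact [set: X] -> compact [set: glue_type phi])
  /\
  (* 4 *)
  (first_countable X -> first_countable Y -> compact [set: X] ->
   locally_compact_space Y -> (forall x : X, compact (phi @^-1` [set x])) ->
   first_countable (glue_type phi))
  /\
  (* 5 *)
  (zero_dim X -> zero_dim Y -> compact [set: X] -> locally_compact_space Y ->
   zero_dim (glue_type phi))
  /\
  (* 6 *)
  (@second_countable X -> hereditarily_separable (power_omega Y) ->
   hereditarily_separable (power_omega (glue_type phi))).
Proof.
move=> hX hY cphi; split.
  split; [exact: closed_range_glueX|exact: open_range_glueY|exact: open_glueXP|].
  by move=> A; exact: open_glueYP.
split; first exact: glue_hausdorff.
split; first exact: glue_compact.
split; first by move=> fX fY _; exact: glue_first_countable.
split; first by move=> zX zY _; exact: glue_zero_dim.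
exact: glue_power_hereditarily_separable.
Qed.
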